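(* Let $n\geq 4$ be even and let $f:(\mathbb{P}(\mathbb{R}^n))^{n+1}\to\mathbb{R}_\varepsilon$ be a non-zero $\mathrm{GL}_n(\mathbb{R})$-equivariant map. Then $df$ does not vanish everywhere on $(\mathbb{P}(\mathbb{R}^n))^{n+2}$. (For $n=2$ this conclusion fails.)
   Context: $\mathbb{R}_\varepsilon$ is $\mathbb{R}$ with $g\in\mathrm{GL}_n(\mathbb{R})$ acting by $\operatorname{sign}\det g$; equivariance means $f(gx_0,\dots,gx_n)=\operatorname{sign}(\det g)f(x_0,\dots,x_n)$. The coboundary is $df(x_0,\dots,x_{n+1})=\sum_{i=0}^{n+1}(-1)^if(x_0,\dots,\widehat{x_i},\dots,x_{n+1})$. *)

From HB Require Import structures.
From Stdlib Require Import Reals Lra.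
From Stdlib Require Import ClassicalEpsilon FunctionalExtensionality.
From mathcomp Require Import all_boot all_order all_algebra.

Set Implicit Arguments.
Unset Strict Implicit.
Unset Printing Implicit Defensive.

Definition Req_bool (x y : R) : bool := if Req_EM_T x y then true else false.

Lemma Req_boolP : Equality.axiom Req_bool.
Proof. move=> x y; rewrite /Req_bool; case: Req_EM_T => h; by constructor. Qed.

HB.instance Definition _ := hasDecEq.Build R Req_boolP.

Definition R_find (P : pred R) (n : nat) : option R :=
  match excluded_middle_informative (exists x, P x) with
  | left h => Some (proj1_sig (constructive_indefinite_description _ h))
  | right _ => None
  end.

Lemma R_find_correct P n x : R_find P n = Some x -> P x.
Proof.
rewrite /R_find; case: excluded_middle_informative => // h [<-].
exact: proj2_sig (constructive_indefinite_description _ h).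
Qed.

Lemma R_find_complete (P : pred R) : (exists x, P x) -> exists n, R_find P n.
Proof. by move=> h; exists 0%N; rewrite /R_find; case: excluded_middle_informative. Qed.

Lemma R_find_ext (P Q : pred R) : P =1 Q -> R_find P =1 R_find Q.
Proof. by move=> /functional_extensionality ->. Qed.

HB.instance Definition _ :=
  hasChoice.Build R R_find_correct R_find_complete R_find_ext.

Lemma R_addA : associative Rplus. Proof. move=> *; lra. Qed.
Lemma R_addC : commutative Rplus. Proof. move=> *; lra. Qed.
Lemma R_add0 : left_id R0 Rplus. Proof. move=> *; lra. Qed.
Lemma R_addN : left_inverse R0 Ropp Rplus. Proof. move=> *; lra. Qed.

HB.instance Definition _ := GRing.isZmodule.Build R R_addA R_addC R_add0 R_addN.

Lemma R_mulA : associative Rmult. Proof. move=> *; ring. Qed.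
Lemma R_mulC : commutative Rmult. Proof. move=> *; ring. Qed.
Lemma R_mul1 : left_id R1 Rmult. Proof. move=> *; ring. Qed.
Lemma R_mulD : left_distributive Rmult Rplus. Proof. move=> *; ring. Qed.
Lemma R_one_neq0 : R1 != R0.
Proof. by apply/eqP; exact: R1_neq_R0. Qed.

HB.instance Definition _ :=
  GRing.Zmodule_isComNzRing.Build R R_mulA R_mulC R_mul1 R_mulD R_one_neq0.

Definition R_inv (x : R) : R := if Req_EM_T x R0 then R0 else Rinv x.

Lemma R_mulV (x : R) : x != R0 -> Rmult (R_inv x) x = R1.
Proof.
move=> /eqP hx; rewrite /R_inv; destruct (Req_EM_T x R0) as [e|ne].
  by case: hx.
exact: Rinv_l.
Qed.

Lemma R_inv0 : R_inv R0 = R0.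
Proof. rewrite /R_inv; destruct (Req_EM_T R0 R0); [done | by case: n]. Qed.

HB.instance Definition _ := GRing.ComNzRing_isField.Build R R_mulV R_inv0.

Local Open Scope ring_scope.

(* We identify R^n with row vectors 'rV[R]_n.  A point of P(R^n) is a
   one-dimensional linear subspace of R^n, represented canonically (via the
   MathComp row-space machinery) by the square matrix <<L>>%MS generating it:
   a matrix L with \rank L = 1 and <<L>>%MS = L. *)
Definition is_line (n : nat) (L : 'M[R]_n) : bool :=
  (\rank L == 1)%N && (<<L>>%MS == L).

Definition Proj (n : nat) := {L : 'M[R]_n | is_line L}.

(* Linear action of g in GL_n(R) on R^n (row-vector convention):
   v |-> v *m g^T, i.e. the column vector g v^T; induced action on lines. *)
Lemma act_line_proof (n : nat) (g : 'M[R]_n) (L : 'M[R]_n) :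
  g \in unitmx -> is_line L -> is_line <<L *m g^T>>%MS.
Proof.
move=> hg /andP [hr _]; apply/andP; split; last by rewrite genmx_id.
rewrite genmxE mxrankMfree //; apply/row_freeP.
by exists (invmx g^T); rewrite mulmxV // unitmx_tr.
Qed.

Definition act (n : nat) (g : 'M[R]_n) (hg : g \in unitmx) (x : Proj n) : Proj n :=
  exist _ <<val x *m g^T>>%MS (act_line_proof hg (valP x)).

Definition sign_det (n : nat) (g : 'M[R]_n) : R :=
  if Rlt_dec R0 (\det g) then 1 else -1.

Definition equivariant (n k : nat) (f : ('I_k -> Proj n) -> R) : Prop :=
  forall (g : 'M[R]_n) (hg : g \in unitmx) (x : 'I_k -> Proj n),
    f (fun i => act hg (x i)) = sign_det g * f x.

(* Homogeneous coboundary: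
   df(x_0,...,x_{k}) = sum_{i=0}^{k} (-1)^i f(x_0,..,^x_i,..,x_{k}).
   The face omitting x_i is j |-> x (lift i j). *)
Definition coboundary (n k : nat) (f : ('I_k -> Proj n) -> R)
  (x : 'I_k.+1 -> Proj n) : R :=
  \sum_(i < k.+1) (-1) ^+ i * f (fun j => x (lift i j)).

(* If all but one of the points x_i lie on a hyperplane H, the reflection in H
   along the remaining point (or along any vector off H) has determinant -1 and
   fixes every x_i, so equivariance gives f x = - f x = 0.  Hence f x <> 0 puts x
   in general position: in a suitable basis x = ([1:...:1], [e_1], ..., [e_n]).
   Appending [e_1 + e_2] gives a configuration y whose faces other than x all
   have n of their n + 1 points on a coordinate hyperplane (this needs n >= 3),
   so (df) y = +- f x <> 0. *)

From HB Require Import structures.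
From Stdlib Require Import Reals Lra FunctionalExtensionality.
From mathcomp Require Import all_boot all_order all_algebra.
Import GRing.Theory.
Local Open Scope ring_scope.

Set Implicit Arguments.
Unset Strict Implicit.
Unset Printing Implicit Defensive.

Lemma det_add_rank1 (F : comNzRingType) n (u : 'cV[F]_n) (v : 'rV[F]_n) :
  \det (1%:M + u *m v) = 1 + (v *m u) 0 0.
Proof.
have e1 : block_mx (1%:M : 'M_1) (- v) u 1%:M =
   block_mx 1%:M 0 u 1%:M *m block_mx 1%:M (- v) 0 (1%:M + u *m v).
  rewrite mulmx_block !(mulmx1, mul1mx, mul0mx, mulmx0, addr0, add0r).
  by rewrite mulmxN addrCA addNr addr0.
have e2 : block_mx (1%:M : 'M_1) (- v) u 1%:M =
   block_mx (1%:M + v *m u) (- v) 0 1%:M *m block_mx 1%:M 0 u 1%:M.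
  rewrite mulmx_block !(mulmx1, mul1mx, mul0mx, mulmx0, addr0, add0r).
  by rewrite mulNmx addrK.
have := congr1 determinant e1; rewrite e2 !det_mulmx !det_ublock !det_lblock.
rewrite !det1 !mulr1 !mul1r det_mx11 => <-.
by rewrite !mxE.
Qed.

Section Reflection.

Variables (F : fieldType) (n : nat) (c : 'rV[F]_n) (phi : 'cV[F]_n).
Hypothesis c_phi_neq0 : (c *m phi) 0 0 != 0.

Definition reflection : 'M[F]_n := 1%:M - (2 / (c *m phi) 0 0) *: (phi *m c).

Lemma det_reflection : \det reflection = -1.
Proof.
rewrite /reflection -scaleNr scalemxAl det_add_rank1.
by rewrite -scalemxAr mxE mulNr divfK // mulr2n opprD addrA subrr add0r.
Qed.

Lemma mulmx_reflection_ker m (A : 'M[F]_(m, n)) :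
  A *m phi = 0 -> A *m reflection = A.
Proof.
by move=> hA; rewrite mulmxBr mulmx1 -scalemxAr mulmxA hA mul0mx scaler0 subr0.
Qed.

Lemma mulmx_reflection_axis : c *m reflection = - c.
Proof.
rewrite mulmxBr mulmx1 -scalemxAr mulmxA.
rewrite {2}[c *m phi]mx11_scalar mul_scalar_mx.
by rewrite scalerA divfK // scaler_nat mulr2n opprD addrA subrr add0r.
Qed.

End Reflection.

Lemma separating_functional (F : fieldType) m n (U : 'M[F]_(m, n)) (c : 'rV[F]_n) :
  ~~ (c <= U)%MS -> exists2 phi : 'cV[F]_n, (c *m phi) 0 0 != 0 & U *m phi = 0.
Proof.
rewrite submxE => hc.
have [j hj] : exists j, (c *m cokermx U) 0 j != 0.
  apply/existsP; rewrite -negb_forall; apply: contra hc => /forallP h0.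
  by apply/eqP/matrixP => i j; rewrite ord1 [RHS]mxE; apply/eqP/h0.
exists (cokermx U *m delta_mx j 0); first by rewrite mulmxA -colE mxE.
by rewrite mulmxA mulmx_coker mul0mx.
Qed.

Lemma kermx_not_full (F : fieldType) n p (psi : 'M[F]_(n, p)) :
  psi != 0 -> ~~ row_full (kermx psi).
Proof.
apply: contra => /row_fullP [B hB]; apply/eqP.
by rewrite -[psi]mul1mx -hB -mulmxA mulmx_ker mulmx0.
Qed.

Lemma mx11_eq0 (F : nmodType) (A : 'M[F]_1) : (A == 0) = (A 0 0 == 0).
Proof.
apply/eqP/eqP => [-> | h]; first by rewrite mxE.
by apply/matrixP => i j; rewrite !ord1 h mxE.
Qed.

Lemma invmx_mulmx_neq0 (F : fieldType) n p (W : 'M[F]_n) (psi : 'M[F]_(n, p)) :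
  W \in unitmx -> psi != 0 -> invmx W *m psi != 0.
Proof. by move=> hW; apply: contra_neq => h; rewrite -(mulKVmx hW psi) h mulmx0. Qed.

Lemma genmx_mulmx_sub_kermx (F : fieldType) n p (W : 'M[F]_n) (v : 'rV[F]_n)
    (psi : 'M[F]_(n, p)) :
  W \in unitmx -> (<<v *m W>> <= kermx (invmx W *m psi))%MS = (v *m psi == 0).
Proof. by move=> hW; rewrite genmxE; apply/sub_kermxP/eqP; rewrite mulmxA mulmxK. Qed.

Lemma genmx_scale (F : fieldType) m n (a : F) (A : 'M[F]_(m, n)) :
  a != 0 -> <<a *: A>>%MS = <<A>>%MS.
Proof. by move=> ha; apply/genmxP/eqmxP; exact: eqmx_scale. Qed.

(* The projective frame [1:...:1], [e_1], ..., [e_n], indexed by t = 0, ..., n;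
   every index t > n gives the extra point [e_1 + e_2]. *)
Definition frame (F : nzRingType) n (t : nat) : 'rV[F]_n :=
  \row_(k < n) if t == 0%N then 1 else if (t <= n)%N then (t.-1 == k)%:R
               else (k <= 1)%N%:R.

Section Frame.

Variables (F : nzRingType) (n : nat).

Lemma frame0 : frame F n 0 = const_mx 1.
Proof. by apply/rowP => k; rewrite !mxE. Qed.

Lemma frameS (l : 'I_n) : frame F n l.+1 = delta_mx 0 l.
Proof. by apply/rowP => k; rewrite !mxE /= ltn_ord eq_sym. Qed.

Lemma frame_neq0 t : (0 < n)%N -> frame F n t != 0.
Proof.
case: n => // m _; apply/negP => /eqP /rowP.
have [|t_gt] := leqP t m.+1; last first.
  move/(_ ord0); rewrite !mxE /= leqNgt t_gt /=.
  by case: (t == 0%N) => /eqP; rewrite oner_eq0.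
case: t => [_|t t_le]; first by move/(_ ord0); rewrite !mxE /= => /eqP; rewrite oner_eq0.
by move/(_ (inord t)); rewrite !mxE /= t_le inordK // eqxx => /eqP; rewrite oner_eq0.
Qed.

Lemma frame_face_hyperplane i : (3 <= n)%N -> (i <= n)%N ->
  exists tq (psi : 'cV[F]_n), [/\ (tq < n.+2)%N, tq != i,
    (frame F n tq *m psi) 0 0 != 0 &
    forall t, t != i -> t != tq -> (frame F n t *m psi) 0 0 = 0].
Proof.
move=> n_ge3 i_le.
have coordE (k : 'I_n) t : (frame F n t *m delta_mx k (0 : 'I_1)) 0 0 = frame F n t 0 k.
  by rewrite -colE mxE.
have coordBE (k l : 'I_n) t :
    (frame F n t *m (delta_mx k (0 : 'I_1) - delta_mx l (0 : 'I_1))) 0 0 =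
    frame F n t 0 k - frame F n t 0 l.
  by rewrite mulmxBr -!colE !mxE.
have e0 : (0 < n)%N by apply: leq_trans n_ge3.
have e1 : (1 < n)%N by apply: leq_trans n_ge3.
have e2 : (2 < n)%N by [].
case: i i_le => [|[|[|s]]] i_le.
- exists 3%N, (delta_mx (Ordinal e2) 0); split => //.
    by rewrite coordE mxE /= n_ge3 oner_neq0.
  move=> t ti tq; rewrite coordE mxE.
  by case: t ti tq => [|[|[|[|t]]]] //= _ _; case: ifP.
- exists 2%N, (delta_mx (Ordinal e1) 0 - delta_mx (Ordinal e0) 0); split => //.
    by rewrite coordBE !mxE /= e1 subr0 oner_neq0.
  move=> t ti tq; rewrite coordBE !mxE.
  by case: t ti tq => [|[|[|t]]] //= _ _; [rewrite subrr | case: ifP; rewrite ?subrr].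
- exists 1%N, (delta_mx (Ordinal e0) 0 - delta_mx (Ordinal e1) 0); split => //.
    by rewrite coordBE !mxE /= e0 subr0 oner_neq0.
  move=> t ti tq; rewrite coordBE !mxE.
  by case: t ti tq => [|[|[|t]]] //= _ _; [rewrite subrr | case: ifP; rewrite ?subrr].
- exists 0%N, (delta_mx (Ordinal i_le) 0); split => //.
    by rewrite coordE mxE /= oner_neq0.
  move=> t ti tq; rewrite coordE mxE.
  case: t ti tq => [|t] //=; rewrite eqSS => ti _.
  by rewrite (negbTE ti); case: ifP.
Qed.

End Frame.

Lemma line_genmx n (L : Proj n) : <<val L>>%MS = val L.
Proof. by case/andP: (valP L) => _ /eqP. Qed.

Lemma line_nz_rowE n (L : Proj n) : val L = <<nz_row (val L)>>%MS.
Proof.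
case/andP: (valP L) => /eqP hr _.
have hL : val L != 0 by apply/eqP => h0; move: hr; rewrite h0 mxrank0.
rewrite -[LHS]line_genmx; apply/genmxP; rewrite /eqmx nz_row_sub andbT.
by rewrite -(mxrank_leqif_sup (nz_row_sub _)).2 rank_rV nz_row_eq0 hL hr.
Qed.

Lemma genmx_is_line n (v : 'rV[R]_n) : v != 0 -> is_line <<v>>%MS.
Proof. by move=> hv; rewrite /is_line genmxE rank_rV hv genmx_id !eqxx. Qed.

Definition line_of n (v : 'rV[R]_n) (hv : v != 0) : Proj n :=
  exist _ <<v>>%MS (genmx_is_line hv).

Lemma sign_det_eqN1 n (g : 'M[R]_n) : \det g = -1 -> sign_det g = -1.
Proof.
rewrite /sign_det => ->; case: Rlt_dec => // h; exfalso; move: h.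
change (~ Rlt R0 (Ropp R1)); lra.
Qed.

Section Equivariance.

Variables (n k : nat) (f : ('I_k -> Proj n) -> R).
Hypothesis f_equiv : equivariant f.

Lemma equivariant_eq0_of_fixed (x : 'I_k -> Proj n) g (hg : g \in unitmx) :
  sign_det g = -1 -> (forall i, act hg (x i) = x i) -> f x = 0.
Proof.
move=> hsign hfix; have := f_equiv hg x.
rewrite (functional_extensionality _ _ hfix) hsign => hx.
change (f x = Rmult (Ropp R1) (f x)) in hx; change (f x = R0); lra.
Qed.

Lemma equivariant_eq0_of_reflection (x : 'I_k -> Proj n) (c : 'rV[R]_n)
    (phi : 'cV[R]_n) :
  (c *m phi) 0 0 != 0 ->
  (forall i, val (x i) *m phi = 0 \/ val (x i) = <<c>>%MS) -> f x = 0.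
Proof.
move=> hc hx; pose g := (reflection c phi)^T.
have det_g : \det g = -1 by rewrite det_tr det_reflection.
have hg : g \in unitmx by rewrite unitmxE det_g unitfE oppr_eq0 oner_eq0.
apply: (equivariant_eq0_of_fixed (hg := hg) (sign_det_eqN1 det_g)) => i.
apply: val_inj; rewrite /= trmxK; case: (hx i) => [hker | ->].
  by rewrite mulmx_reflection_ker // line_genmx.
apply/genmxP/eqmxP; apply: eqmx_trans (eqmxMr _ (genmxE c)) _.
by rewrite mulmx_reflection_axis //; apply: eqmx_opp.
Qed.

Lemma equivariant_eq0_of_degenerate (x : 'I_k -> Proj n) (i0 : 'I_k) m
    (U : 'M[R]_(m, n)) :
  ~~ row_full U -> (forall i, i != i0 -> (val (x i) <= U)%MS) -> f x = 0.
Proof.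
move=> hU hx.
have [c hcU hc] : exists2 c : 'rV_n, ~~ (c <= U)%MS &
    forall i, (val (x i) <= U)%MS \/ val (x i) = <<c>>%MS.
  have [hi0 | hi0] := boolP (val (x i0) <= U)%MS.
    move: hU; rewrite -sub1mx => /row_subPn [j hj].
    exists (row j 1%:M) => // i; left.
    by case: (eqVneq i i0) => [-> | /hx].
  exists (nz_row (val (x i0))); first by rewrite -genmxE -line_nz_rowE.
  move=> i; case: (eqVneq i i0) => [-> | /hx]; last by left.
  by right; exact: line_nz_rowE.
have [phi hcphi hUphi] := separating_functional hcU.
apply: (equivariant_eq0_of_reflection (x := x) hcphi) => i.
case: (hc i) => [/submxP [D ->] | ->]; last by right.
by left; rewrite -mulmxA hUphi mulmx0.
Qed.

Lemma equivariant_face_eq0 (y : 'I_k.+1 -> Proj n) (i i0 : 'I_k.+1) m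
    (U : 'M[R]_(m, n)) :
  ~~ row_full U -> i0 != i -> (forall t, t != i -> t != i0 -> (val (y t) <= U)%MS) ->
  f (fun j => y (lift i j)) = 0.
Proof.
move=> hU; case: (unliftP i i0) => [j0 -> _ | ->]; last by rewrite eqxx.
move=> hy; apply: (equivariant_eq0_of_degenerate (i0 := j0) hU) => j hj.
by apply: hy; rewrite ?(inj_eq (@lift_inj _ i)) // eq_sym neq_lift.
Qed.

End Equivariance.

Lemma equivariant_neq0_frame n (f : ('I_n.+1 -> Proj n) -> R)
    (x : 'I_n.+1 -> Proj n) :
  equivariant f -> f x <> 0 ->
  exists2 W : 'M[R]_n, W \in unitmx &
    forall j : 'I_n.+1, val (x j) = <<frame R n j *m W>>%MS.
Proof.
move=> f_equiv fx_neq0; pose v i := nz_row (val (x i)).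
have xE i : val (x i) = <<v i>>%MS := line_nz_rowE (x i).
pose U : 'M[R]_n := \matrix_j v (lift ord0 j).
have xSE j : val (x (lift ord0 j)) = <<delta_mx (0 : 'I_1) j *m U>>%MS.
  by rewrite -rowE rowK.
have U_unit : U \in unitmx.
  rewrite -row_full_unit; have [//|hU] := boolP (row_full U); case: fx_neq0.
  apply: (equivariant_eq0_of_degenerate f_equiv (i0 := ord0) hU) => i.
  case: (unliftP ord0 i) => [j -> _ | ->]; last by rewrite eqxx.
  by rewrite xSE genmxE submxMl.
pose a := v ord0 *m invmx U.
have x0E : val (x ord0) = <<a *m U>>%MS by rewrite xE mulmxKV.
have a_neq0 j : a 0 j != 0.
  apply/eqP => a_j; case: fx_neq0; pose psi : 'cV[R]_n := delta_mx j (0 : 'I_1).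
  have psi_neq0 : psi != 0.
    by apply/eqP => /matrixP/(_ j 0); rewrite !mxE !eqxx; exact/eqP/oner_neq0.
  have hU := kermx_not_full (invmx_mulmx_neq0 U_unit psi_neq0).
  apply: (equivariant_eq0_of_degenerate f_equiv (i0 := lift ord0 j) hU) => i.
  case: (unliftP ord0 i) => [l -> | ->] hl.
    rewrite xSE genmx_mulmx_sub_kermx // mul_delta_mx_0 //.
  by rewrite x0E genmx_mulmx_sub_kermx // mx11_eq0 -colE mxE a_j.
exists (diag_mx a *m U).
  by rewrite unitmx_mul U_unit andbT unitmxE det_diag unitfE; apply/prodf_neq0.
move=> j; rewrite mulmxA; case: (unliftP ord0 j) => [l -> | ->] /=.
  by rewrite frameS xSE -[_ *m diag_mx a]rowE row_diag_mx -scalemxAl genmx_scale.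
rewrite frame0 x0E; congr (<< _ *m U >>%MS).
by apply/rowP => l; rewrite mul_mx_diag !mxE mul1r.
Qed.

Theorem proposition3p2 (n : nat) (hn : (4 <= n)%N) (heven : ~~ odd n)
  (f : ('I_n.+1 -> Proj n) -> R) (hf : equivariant f)
  (hnz : exists x : 'I_n.+1 -> Proj n, f x <> 0) :
  exists y : 'I_n.+2 -> Proj n, coboundary f y <> 0.
Proof.
have [x fx_neq0] := hnz.
have [W W_unit xE] := equivariant_neq0_frame hf fx_neq0.
have frameW_neq0 t : frame R n t *m W != 0.
  by rewrite mulmx_free_eq0 ?row_free_unit // frame_neq0 //; apply: leq_trans hn.
pose y (t : 'I_n.+2) := line_of (frameW_neq0 t).
exists y; rewrite /coboundary big_ord_recr /= big1 ?add0r => [|i _].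
  have -> : (fun j => y (lift ord_max j)) = x.
    apply: functional_extensionality => j; apply: val_inj; rewrite xE /=.
    by congr (<< frame R n _ *m W >>%MS); exact: lift_max.
  by apply/eqP; rewrite mulf_neq0 ?expf_neq0 ?oppr_eq0 ?oner_eq0 //; apply/eqP.
have [tq [psi [tq_lt tq_neq_i tq_psi t_psi]]] :=
  frame_face_hyperplane R (ltnW hn) (ltn_ord i).
have psi_neq0 : psi != 0 by apply: contraNneq tq_psi => ->; rewrite mulmx0 mxE.
rewrite (equivariant_face_eq0 hf (i0 := Ordinal tq_lt) (U := kermx (invmx W *m psi)))
  ?mulr0 //.
- exact/kermx_not_full/invmx_mulmx_neq0.
- move=> t t_neq_i t_neq_tq; rewrite genmx_mulmx_sub_kermx // mx11_eq0.
  by apply/eqP/t_psi.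
Qed.
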